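(* Let $D\in\mathbb{R}^{n\times n}$, $\lambda,\mu>0$, and let $\mathcal V,\mathcal W\subseteq\mathbb{R}^{n\times n}$ be arbitrary subsets. For $X\in\mathbb{R}^{n\times n}$ and $c>0$ let $\mathcal U_c(X)=\{\Delta\in\mathbb{R}^{n\times n}:\|\Delta\|_F\le c\|X\|_F\}$. Then the robust optimization problem $$\min_{X\in\mathcal V,\,Y\in\mathcal W}\ \max_{\Delta_1\in\mathcal U_\lambda(X),\,\Delta_2\in\mathcal U_\mu(Y)}\ \|D+\Delta_1+\Delta_2-X-Y\|_F$$ is equivalent to the regularized problem $$\min_{X\in\mathcal V,\,Y\in\mathcal W}\ \|D-X-Y\|_F+\lambda\|X\|_F+\mu\|Y\|_F,$$ in the sense that they have the same optimal value and the same optimal solutions.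
   Context: $\|\cdot\|_F$ denotes the Frobenius norm. *)

From HB Require Import structures.
From mathcomp Require Import all_boot all_order all_algebra.
From mathcomp Require Import all_classical all_reals.
From mathcomp Require Import ereal.
Set Implicit Arguments. Unset Strict Implicit. Unset Printing Implicit Defensive.
Import Order.TTheory GRing.Theory Num.Theory.
Local Open Scope ring_scope.
Local Open Scope classical_set_scope.

Definition frob (R : realType) (n : nat) (A : 'M[R]_n) : R :=
  Num.sqrt (\sum_(i < n) \sum_(j < n) A i j ^+ 2).

Definition Uset (R : realType) (n : nat) (c : R) (X : 'M[R]_n) : set 'M[R]_n :=
  [set Delta | frob Delta <= c * frob X].

Definition robust_obj (R : realType) (n : nat) (D : 'M[R]_n) (lam mu : R)
    (X Y : 'M[R]_n) : \bar R :=
  ereal_sup [set z : \bar R | exists D1 D2 : 'M[R]_n,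
     [/\ Uset lam X D1, Uset mu Y D2 & z = (frob (D + D1 + D2 - X - Y))%:E] ].

Definition reg_obj (R : realType) (n : nat) (D : 'M[R]_n) (lam mu : R)
    (X Y : 'M[R]_n) : \bar R :=
  (frob (D - X - Y) + lam * frob X + mu * frob Y)%:E.

Definition opt_value (R : realType) (n : nat) (V W : set 'M[R]_n)
    (f : 'M[R]_n -> 'M[R]_n -> \bar R) : \bar R :=
  ereal_inf [set z : \bar R | exists X Y, [/\ V X, W Y & z = f X Y] ].

Definition is_opt_sol (R : realType) (n : nat) (V W : set 'M[R]_n)
    (f : 'M[R]_n -> 'M[R]_n -> \bar R) (X Y : 'M[R]_n) : Prop :=
  [/\ V X, W Y & forall X' Y', V X' -> W Y' -> (f X Y <= f X' Y')%E].

(* The Frobenius norm is the Euclidean norm of the n^2 entries, so it satisfies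
   the triangle inequality: for fixed (X, Y) every admissible perturbation gives
   ||D + D1 + D2 - X - Y|| <= ||D - X - Y|| + lam ||X|| + mu ||Y||, and equality
   is attained by D1, D2 aligned with the residual D - X - Y, of norms lam ||X||
   and mu ||Y||. Hence the inner supremum of the robust problem equals the
   regularized objective at every (X, Y), and the two problems coincide. *)
From HB Require Import structures.
From mathcomp Require Import all_boot all_order all_algebra.
From mathcomp Require Import all_classical all_reals.
From mathcomp Require Import ereal.
From mathcomp Require Import lra.

Set Implicit Arguments.
Unset Strict Implicit.
Unset Printing Implicit Defensive.
Import Order.TTheory GRing.Theory Num.Theory.
Local Open Scope ring_scope.
Local Open Scope classical_set_scope.

Section L2Norm.
Variables (R : rcfType) (I : finType).
Implicit Types (f g : I -> R).

Definition l2norm f : R := Num.sqrt (\sum_i f i ^+ 2).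

Lemma l2norm_ge0 f : 0 <= l2norm f.
Proof. exact: sqrtr_ge0. Qed.

Lemma sqr_l2norm f : l2norm f ^+ 2 = \sum_i f i ^+ 2.
Proof. by rewrite sqr_sqrtr // sumr_ge0 // => i _; rewrite sqr_ge0. Qed.

Lemma l2norm_eq0 f : l2norm f = 0 -> forall i, f i = 0.
Proof.
move=> f0 i; apply/eqP; rewrite -sqrf_eq0; apply/eqP.
apply: (@psumr_eq0P _ _ predT (fun i => f i ^+ 2)) => // [j _|].
  exact: sqr_ge0.
by rewrite -sqr_l2norm f0 expr0n.
Qed.

Lemma l2normZ a f : l2norm (fun i => a * f i) = `|a| * l2norm f.
Proof.
rewrite /l2norm (eq_bigr (fun i => a ^+ 2 * f i ^+ 2)) => [|i _]; last first.
  by rewrite exprMn.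
by rewrite -mulr_sumr sqrtrM ?sqr_ge0 // sqrtr_sqr.
Qed.

Lemma sum_mul_le_l2norm f g : \sum_i f i * g i <= l2norm f * l2norm g.
Proof.
set a := l2norm f; set b := l2norm g.
have [ab0|ab_neq0] := eqVneq (a * b) 0.
  suff -> : \sum_i f i * g i = 0 by rewrite ab0.
  move: ab0 => /eqP; rewrite mulf_eq0 => /orP[] /eqP /l2norm_eq0 fg0.
    by rewrite big1 // => i _; rewrite fg0 mul0r.
  by rewrite big1 // => i _; rewrite fg0 mulr0.
have ab_gt0 : 0 < a * b by rewrite lt_def ab_neq0 mulr_ge0 ?l2norm_ge0.
have amgm i : a * b * (f i * g i) *+ 2 <= b ^+ 2 * f i ^+ 2 + a ^+ 2 * g i ^+ 2.
  by have := sqr_ge0 (b * f i - a * g i); nra.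
have : a * b * (\sum_i f i * g i) *+ 2 <= b ^+ 2 * a ^+ 2 + a ^+ 2 * b ^+ 2.
  rewrite {1}[a ^+ 2]sqr_l2norm {2}[b ^+ 2]sqr_l2norm.
  rewrite !mulr_sumr -sumrMnl -big_split /=.
  by apply: ler_sum => i _; apply: amgm.
by rewrite -mulr_natr => H; rewrite -(ler_pM2l ab_gt0); lra.
Qed.

Lemma ler_l2normD f g : l2norm (fun i => f i + g i) <= l2norm f + l2norm g.
Proof.
rewrite -ler_sqr ?nnegrE ?addr_ge0 ?l2norm_ge0 // !sqr_l2norm.
rewrite (eq_bigr (fun i => f i ^+ 2 + g i ^+ 2 + (f i * g i) *+ 2)) => [|i _].
  rewrite !big_split /= -!sqr_l2norm.
  by have := sum_mul_le_l2norm f g; lra.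
by rewrite sqrrD addrAC.
Qed.

End L2Norm.

Section Frobenius.
Variables (R : realType) (n : nat).
Implicit Types (A B : 'M[R]_n).

Lemma frobE A : frob A = l2norm (fun p : 'I_n * 'I_n => A p.1 p.2).
Proof. by rewrite /frob pair_bigA. Qed.

Lemma frob_ge0 A : 0 <= frob A.
Proof. exact: sqrtr_ge0. Qed.

Lemma frob_eq0 A : frob A = 0 -> A = 0.
Proof.
by rewrite frobE => /l2norm_eq0 A0; apply/matrixP => i j; rewrite mxE (A0 (i, j)).
Qed.

Lemma frobZ a A : frob (a *: A) = `|a| * frob A.
Proof. by rewrite !frobE -l2normZ; congr l2norm; apply/funext => p; rewrite mxE. Qed.

Lemma ler_frobD A B : frob (A + B) <= frob A + frob B.
Proof.
rewrite !frobE (_ : (fun p => _) = (fun p => A p.1 p.2 + B p.1 p.2)).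
  exact: ler_l2normD.
by apply/funext => p; rewrite mxE.
Qed.

Lemma frob_dim0 A : n = 0%N -> frob A = 0.
Proof. by move=> n0; move: A; rewrite n0 => A; rewrite /frob big_ord0 sqrtr0. Qed.

Lemma frob_normalize A : frob A != 0 -> frob ((frob A)^-1 *: A) = 1.
Proof. by move=> A_neq0; rewrite frobZ ger0_norm ?invr_ge0 ?frob_ge0 // mulVf. Qed.

Lemma frob_unit_direction A : (0 < n)%N -> exists U, frob U = 1 /\ A = frob A *: U.
Proof.
move=> n_gt0; have [A0|A_neq0] := eqVneq (frob A) 0; last first.
  by exists ((frob A)^-1 *: A); rewrite frob_normalize // scalerA mulfV // scale1r.
pose C : 'M[R]_n := const_mx 1.
have C_neq0 : frob C != 0.
  apply/eqP => /frob_eq0 /matrixP /(_ (Ordinal n_gt0) (Ordinal n_gt0)) /eqP.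
  by rewrite !mxE oner_eq0.
exists ((frob C)^-1 *: C); split; first exact: frob_normalize.
by rewrite A0 scale0r; apply: frob_eq0.
Qed.

Lemma frob_aligned_perturbations (E : 'M[R]_n) a b :
  (0 < n)%N -> 0 <= a -> 0 <= b ->
  exists D1 D2 : 'M[R]_n,
    [/\ frob D1 = a, frob D2 = b & frob (E + D1 + D2) = frob E + a + b].
Proof.
move=> n_gt0 a_ge0 b_ge0; have [U [U1 EU]] := frob_unit_direction E n_gt0.
exists (a *: U), (b *: U); rewrite !frobZ U1 !mulr1 !ger0_norm //; split=> //.
by rewrite {1}EU -!scalerDl frobZ U1 mulr1 ger0_norm // !addr_ge0 ?frob_ge0.
Qed.

End Frobenius.

Lemma robust_objE (R : realType) (n : nat) (D : 'M[R]_n) (lam mu : R) X Y :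
  0 <= lam -> 0 <= mu -> robust_obj D lam mu X Y = reg_obj D lam mu X Y.
Proof.
move=> lam_ge0 mu_ge0.
have residualE D1 D2 : D + D1 + D2 - X - Y = (D - X - Y) + D1 + D2.
  by rewrite -!addrA; congr (_ + _); rewrite addrA addrC -addrA.
apply/eqP; rewrite eq_le; apply/andP; split.
  apply: ge_ereal_sup => _ [D1 [D2 [D1_le D2_le ->]]].
  rewrite lee_fin residualE /Uset /= in D1_le D2_le *.
  have := ler_frobD (D - X - Y) D1; have := ler_frobD (D - X - Y + D1) D2.
  lra.
apply: ereal_sup_ubound.
have [n0|n_gt0] := posnP n.
  by exists 0, 0; split; rewrite /Uset /reg_obj /= ?frob_dim0 // ?mulr0 ?addr0.
have lamX_ge0 : 0 <= lam * frob X by rewrite mulr_ge0 ?frob_ge0.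
have muY_ge0 : 0 <= mu * frob Y by rewrite mulr_ge0 ?frob_ge0.
have [D1 [D2 [D1E D2E worstE]]] :=
  frob_aligned_perturbations (D - X - Y) n_gt0 lamX_ge0 muY_ge0.
by exists D1, D2; rewrite /Uset /= D1E D2E residualE worstE.
Qed.

Theorem proposition3 (R : realType) (n : nat) (D : 'M[R]_n) (lam mu : R)
    (V W : set 'M[R]_n) :
  0 < lam -> 0 < mu ->
  opt_value V W (robust_obj D lam mu) = opt_value V W (reg_obj D lam mu) /\
  (forall X Y : 'M[R]_n,
     is_opt_sol V W (robust_obj D lam mu) X Y <->
     is_opt_sol V W (reg_obj D lam mu) X Y).
Proof.
move=> lam_gt0 mu_gt0.
suff -> : robust_obj D lam mu = reg_obj D lam mu by [].
by apply/funext => X; apply/funext => Y; rewrite robust_objE ?ltW.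
Qed.
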